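(* Let $X$ be a compact metric space and $T:X\to X$ a surjective local homeomorphism such that $Sp_l(X,T)$ is a finite set consisting of isolated points of $X$. Then \[{\rm dim}_{\rm am}(X,T)\le{\rm dim}_{\rm tow}(X,T).\]
   Context: $Sp_l(X,T)=\{x:|T^{-1}(\{x\})|\ge2\}$. For $n\in\mathbb{Z}$ and $x\in X$, $T^n(\{x\})$ is the image under $T^n$ if $n\ge0$ and the preimage under $T^{|n|}$ if $n<0$. $P_d(\mathbb{Z})$ is the set of probability measures on $\mathbb{Z}$ supported on at most $d+1$ points, with metric $\rho(\mu,\nu)=\sum_{m}|\mu(m)-\nu(m)|$ and $\mathbb{Z}$-action $\alpha_n(\mu)(m)=\mu(m-n)$. A map $\varphi:X\to P_d(\mathbb{Z})$ is $(E,\varepsilon)$-equivariant ($E\subseteq\mathbb{Z}$ finite, $\varepsilon>0$) if $\rho(\varphi(y),\alpha_n(\varphi(x)))<\varepsilon$ for all $n\in E$, $x\in X$, $y\in T^n(\{x\})$. ${\rm dim}_{\rm am}(X,T)$ is the least $d$ such that for every finite $E$ and $\varepsilon>0$ there is a continuous $(E,\varepsilon)$-equivariant $\varphi:X\to P_d(\mathbb{Z})$. Tower dimension ${\rm dim}_{\rm tow}(X,T)$: least $d$ such that for every finite $E\subseteq\mathbb{Z}$ there are finitely many pairs $(V_i,S_i)$, $V_i$ open, $S_i\subseteq\mathbb{N}$ finite, with $T^{-m}(\overline{V_i})\cap T^{-n}(\overline{V_i})=\varnothing$ for distinct $m,n\in S_i$ ($T^{-j}$ = preimage under $T^j$), the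 family $\{T^{-n}(V_i):n\in S_i\}$ partitionable into at most $d+1$ subfamilies of pairwise disjoint sets and covering $X$, and each $x$ lying in some $T^{-n}(V_i)$ with $n\in S_i$, $E+n\subseteq S_i$. Dimensions are $\infty$ if no such $d$ exists. *)

From HB Require Import structures.
From mathcomp Require Import all_boot all_order all_algebra.
From mathcomp Require Import all_classical all_reals all_analysis.
Set Implicit Arguments. Unset Strict Implicit. Unset Printing Implicit Defensive.
Import Order.TTheory GRing.Theory Num.Theory.
Import numFieldNormedType.Exports.
Local Open Scope classical_set_scope.
Local Open Scope ring_scope.

(* T^n({x}) for n : int : image under T^n if n >= 0, preimage under T^|n| if n < 0 *)
Definition Tn_orbit (X : Type) (T : X -> X) (n : int) (x : X) : set X :=
  match n with
  | Posz k => [set y | y = iter k T x]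
  | Negz k => [set y | iter k.+1 T y = x]
  end.

(* mu : int -> R is (the mass function of) an element of P_d(Z): a probability
   measure on Z supported on at most d+1 points. *)
Definition in_Pd (R : realType) (d : nat) (mu : int -> R) : Prop :=
  exists s : seq int, [/\ uniq s, (size s <= d.+1)%N,
    (forall m, m \notin s -> mu m = 0),
    (forall m, 0 <= mu m) & \sum_(m <- s) mu m = 1].

(* rho(mu,nu) = sum_m |mu m - nu m| for finitely supported mu, nu:
   the sum computed over any duplicate-free list containing both supports. *)
Definition rho_lt (R : realType) (mu nu : int -> R) (eps : R) : Prop :=
  exists s : seq int, [/\ uniq s,
    (forall m, m \notin s -> mu m = 0 /\ nu m = 0) &
    \sum_(m <- s) `|mu m - nu m| < eps].

Definition alpha (R : realType) (n : int) (mu : int -> R) : int -> R :=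
  fun m => mu (m - n).

Definition rho_continuous (R : realType) (X : topologicalType)
  (phi : X -> int -> R) : Prop :=
  forall (x : X) (eps : R), 0 < eps -> \forall y \near x, rho_lt (phi y) (phi x) eps.

Definition equivariant (R : realType) (X : Type) (T : X -> X)
  (E : seq int) (eps : R) (phi : X -> int -> R) : Prop :=
  forall n, n \in E -> forall x y, Tn_orbit T n x y ->
    rho_lt (phi y) (alpha n (phi x)) eps.

Definition am_prop (R : realType) (X : topologicalType) (T : X -> X) (d : nat) : Prop :=
  forall (E : seq int) (eps : R), 0 < eps ->
    exists phi : X -> int -> R, [/\ forall x, in_Pd d (phi x),
      rho_continuous phi & equivariant T E eps phi].

Definition tow_prop (X : topologicalType) (T : X -> X) (d : nat) : Prop :=
  forall E : seq int,
    exists (k : nat) (V : 'I_k -> set X) (S : 'I_k -> seq nat),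
      [/\ (forall i, open (V i)),
        (forall i m n, m \in S i -> n \in S i -> m != n ->
           (iter m T @^-1` closure (V i)) `&` (iter n T @^-1` closure (V i)) = set0),
        (exists c : 'I_k -> nat -> 'I_d.+1,
           forall i j m n, m \in S i -> n \in S j -> (i, m) != (j, n) ->
             c i m = c j n ->
             (iter m T @^-1` V i) `&` (iter n T @^-1` V j) = set0),
        (forall x : X, exists i n, n \in S i /\ (iter n T @^-1` V i) x) &
        (forall x : X, exists i n, [/\ n \in S i, (iter n T @^-1` V i) x &
           forall e, e \in E -> exists2 m : nat, m \in S i & m%:Z = e + n%:Z])].

(* least d with the property, +oo if none (infimum in the extended reals) *)
Definition dim_am (R : realType) (X : topologicalType) (T : X -> X) : \bar R :=
  ereal_inf [set (d%:R)%:E | d in [set d : nat | am_prop R T d]].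

Definition dim_tow (R : realType) (X : topologicalType) (T : X -> X) : \bar R :=
  ereal_inf [set (d%:R)%:E | d in [set d : nat | tow_prop T d]].

(* local homeomorphism: continuous, and every point has an open neighbourhood U
   on which T is injective and maps open subsets of U to open sets
   (i.e. T|_U is a homeomorphism onto the open set T(U)). *)
Definition local_homeo (X : topologicalType) (T : X -> X) : Prop :=
  continuous T /\
  forall x : X, exists U : set X, [/\ open U, U x, {in U &, injective T} &
    forall W, open W -> W `<=` U -> open (T @` W)].

Definition Sp_l (X : Type) (T : X -> X) : set X :=
  [set x | exists y1 y2, [/\ y1 <> y2, T y1 = x & T y2 = x]].

From HB Require Import structures.
From mathcomp Require Import all_boot all_order all_algebra.
From mathcomp Require Import all_classical all_reals all_analysis.
From mathcomp Require Import zify ring lra.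
Import Order.TTheory GRing.Theory Num.Theory.
Import numFieldNormedType.Exports.
Local Open Scope classical_set_scope.
Local Open Scope ring_scope.
Set Implicit Arguments. Unset Strict Implicit. Unset Printing Implicit Defensive.

(* Take towers for the window [-L, L]. A point z gives mass a_i(n) g_i(T^n z)
   to -n, for every level n of every tower i: here g_i is a continuous bump
   supported in V_i, at most 1, and (by compactness) equal to 1 at some level
   whose window [n - L, n + L] lies in S_i, while a_i(n) counts the radii
   t < L with [n - t, n + t] inside S_i. Normalising gives the map to P_d(Z):
   levels of one colour are disjoint, so at most d + 1 of them are active at
   a point. As a_i is 1-Lipschitz and vanishes off S_i, replacing z by T^k z
   shifts the masses by k up to a total error 2k(d + 1), while the total mass
   is at least L; so the shift is k-equivariant up to 4k(d + 1)/L. *)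

Lemma sum_shift_leq (f g : nat -> bool) n :
  (forall t, f t.+1 -> g t) -> (\sum_(t < n) f t <= \sum_(t < n) g t + 1)%N.
Proof.
move=> fg; case: n => [|n]; first by rewrite !big_ord0.
rewrite big_ord_recl big_ord_recr /= addnC leq_add //; last by case: (f 0).
apply: leq_trans (leq_addr _ _); apply: leq_sum => t _.
by case E: (f _) => //; rewrite /= (fg _ E).
Qed.

Section Plateau.
Local Open Scope nat_scope.
Variables (S : seq nat) (L : nat).

Definition window_in (j t : nat) : bool :=
  [forall s : 'I_t.+1, (j + s \in S) && (s <= j) && (j - s \in S)].

Definition plateau (j : nat) : nat := \sum_(t < L) window_in j t.

Lemma window_inP j t :
  reflect (forall s, s <= t -> [/\ j + s \in S, s <= j & j - s \in S])
          (window_in j t).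
Proof.
apply: (iffP forallP) => H.
  move=> s st; have := H (Ordinal (st : s < t.+1)).
  by case/andP => /andP[-> ->] ->.
by move=> [s /= st]; have [-> -> ->] := H s st.
Qed.

Lemma window_in_succ j t : window_in j t.+1 -> window_in j.+1 t.
Proof.
move/window_inP => H; apply/window_inP => s st.
have [h1 h2 _] := H s.+1 st.
split; [by rewrite addSnnS | lia |].
case: s st {h1 h2} => [|s] st; first by have [+ _ _] := H 1 isT; rewrite addn1.
by have [_ _ +] := H s (leqW (ltnW st)); rewrite subSS.
Qed.

Lemma window_in_pred j t : window_in j.+1 t.+1 -> window_in j t.
Proof.
move/window_inP => H; apply/window_inP => s st.
have [_ h2 h3] := H s.+1 st.
split; [|by []|by rewrite subSS in h3].
case: s st {h2 h3} => [|s] st.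
  by have [_ _ +] := H 1 isT; rewrite subSS subn0 addn0.
by have [+ _ _] := H s (leqW (ltnW st)); rewrite addSnnS.
Qed.

Lemma plateau_notin j : j \notin S -> plateau j = 0.
Proof.
move=> jS; rewrite /plateau big1 // => t _.
case W: (window_in j t) => //; move/window_inP: W => /(_ 0 isT) [+ _ _].
by rewrite addn0 (negbTE jS).
Qed.

Lemma plateau_lipschitz j k : plateau j <= plateau (j + k) + k /\
                              plateau (j + k) <= plateau j + k.
Proof.
elim: k => [|k [IH1 IH2]]; first by rewrite !addn0.
have h1 : plateau (j + k) <= plateau (j + k).+1 + 1.
  by apply: sum_shift_leq => t; apply: window_in_succ.
have h2 : plateau (j + k).+1 <= plateau (j + k) + 1.
  by apply: sum_shift_leq => t; apply: window_in_pred.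
rewrite [j + k.+1]addnS; lia.
Qed.

Lemma plateau_le_succ j : plateau j <= j.+1.
Proof.
have [_] := plateau_lipschitz 0 j; rewrite add0n.
suff : plateau 0 <= 1 by lia.
rewrite /plateau; case: L => [|n]; first by rewrite big_ord0.
rewrite big_ord_recl big1 ?addn0; first by case: (window_in 0 0).
by move=> t _; case W: (window_in _ _) => //; move/window_inP: W => /(_ 1 isT) [].
Qed.

Lemma plateau_full j :
  (forall s, s <= L -> [/\ j + s \in S, s <= j & j - s \in S]) -> plateau j = L.
Proof.
move=> H; rewrite /plateau -[RHS]card_ord -sum1_card; apply: eq_bigr => t _.
suff -> : window_in j t by [].
by apply/window_inP => s st; apply: H; apply: leq_trans st (ltnW _).
Qed.

End Plateau.

Lemma plateau_full_of_shifts (S : seq nat) (L n : nat) :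
  (forall e, e \in [seq l%:Z - L%:Z | l <- iota 0 (2 * L).+1] ->
     exists2 m, m \in S & m%:Z = e + n%:Z) ->
  plateau S L n = L.
Proof.
move=> shifts; apply: plateau_full => s sL.
have [p1 p1S e1] : exists2 m, m \in S & m%:Z = s%:Z + n%:Z.
  by apply: shifts; apply/mapP; exists (s + L)%N; [rewrite mem_iota; lia | lia].
have [p2 p2S e2] : exists2 m, m \in S & m%:Z = - s%:Z + n%:Z.
  by apply: shifts; apply/mapP; exists (L - s)%N; [rewrite mem_iota; lia | lia].
split; [by have -> : (n + s = p1)%N by lia | lia | by have -> : (n - s = p2)%N by lia].
Qed.

Section FinitelySupportedSums.
Variables (R : numDomainType) (I : eqType).

Lemma big_uniq_supp (f : I -> R) s s0 : uniq s -> uniq s0 ->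
  (forall m, m \notin s0 -> f m = 0) -> {subset s0 <= s} ->
  \sum_(m <- s) f m = \sum_(m <- s0) f m.
Proof.
move=> us us0 f0 sub.
rewrite (bigID (fun m => m \in s0)) /= [X in _ + X]big1 ?addr0; last first.
  by move=> m /f0.
rewrite -big_filter; apply: perm_big; apply: uniq_perm.
- exact: filter_uniq.
- exact: us0.
by move=> m; rewrite mem_filter; case: (boolP (m \in s0)) => // /sub ->.
Qed.

Lemma big_uniq_supp_le (f : I -> R) s s0 : uniq s -> uniq s0 ->
  (forall m, 0 <= f m) -> (forall m, m \notin s0 -> f m = 0) ->
  \sum_(m <- s) f m <= \sum_(m <- s0) f m.
Proof.
move=> us us0 fge f0.
rewrite (bigID (fun m => m \in s0)) /= [X in _ + X]big1 ?addr0; last first.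
  by move=> m /f0.
rewrite -big_filter [X in _ <= X](bigID (fun m => m \in [seq m <- s | m \in s0])) /=.
rewrite -[X in X <= _]addr0 lerD ?sumr_ge0 // -[X in _ <= X]big_filter le_eqVlt.
apply/orP; left; apply/eqP; apply: perm_big; apply: uniq_perm; rewrite ?filter_uniq //.
by move=> m; rewrite !mem_filter; case: (m \in s); case: (m \in s0).
Qed.

End FinitelySupportedSums.

Lemma dist_ratio_le (R : realFieldType) (a b A B : R) : 0 <= b -> 0 < A -> 0 < B ->
  `|a / A - b / B| <= `|a - b| / A + b * (`|A - B| / (A * B)).
Proof.
move=> b0 A0 B0.
have -> : a / A - b / B = (a - b) / A + b * ((B - A) / (A * B)).
  by field; rewrite !gt_eqF.
apply: le_trans (ler_normD _ _) _; apply: lerD.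
  by rewrite normrM [`|A^-1|]ger0_norm // invr_ge0 ltW.
rewrite normrM (ger0_norm b0) ler_wpM2l // normrM distrC ger0_norm //.
by rewrite invr_ge0 ltW // mulr_gt0.
Qed.

Lemma intN_or_pos (m : int) :
  (exists j : nat, m = - j%:Z) \/ (exists n : nat, m = n.+1%:Z).
Proof.
case: m => [[|n]|n]; first by left; exists 0%N.
  by right; exists n.
by left; exists n.+1; rewrite NegzE.
Qed.

Lemma continuous_iter (X : topologicalType) (T : X -> X) n :
  continuous T -> continuous (iter n T).
Proof.
move=> cT; elim: n => [|n IH] x; first exact: cvg_id.
exact: (continuous_comp (IH x) (cT _)).
Qed.

Section TowerMeasure.
Variables (R : realType) (X : topologicalType) (T : X -> X) (k : nat)
  (V : 'I_k -> set X) (S : 'I_k -> seq nat) (d L J : nat)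
  (c : 'I_k -> nat -> 'I_d.+1) (g : 'I_k -> X -> R).
Hypothesis colouring : forall i j m n, m \in S i -> n \in S j ->
  (i, m) != (j, n) -> c i m = c j n ->
  (iter m T @^-1` V i) `&` (iter n T @^-1` V j) = set0.
Hypothesis S_lt_J : forall i m, m \in S i -> (m < J)%N.
Hypothesis g_ge0 : forall i y, 0 <= g i y.
Hypothesis g_le1 : forall i y, g i y <= 1.
Hypothesis g_supp : forall i y, 0 < g i y -> V i y.

Let a i j := plateau (S i) L j.

Definition level_mass i (m : int) z : R :=
  if m <= 0 then (a i `|m|)%:R * g i (iter `|m| T z) else 0.

Definition level_bump i (m : int) z : R :=
  if (m <= 0) && (`|m|%N \in S i) then g i (iter `|m| T z) else 0.

Definition active z i (m : int) : bool :=
  [&& m <= 0, `|m|%N \in S i & 0 < g i (iter `|m| T z)].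

Definition mass z m := \sum_(i < k) level_mass i m z.

Definition levels : seq int := [seq - j%:Z | j <- index_iota 0 J].

Definition total_mass z := \sum_(m <- levels) mass z m.

Definition tower_measure z m := mass z m / total_mass z.

Lemma levels_uniq : uniq levels.
Proof.
rewrite map_inj_uniq ?iota_uniq // => x y /eqP; rewrite eqr_opp => /eqP.
by case.
Qed.

Lemma mem_levels m : m <= 0 -> (`|m| < J)%N -> m \in levels.
Proof.
move=> m0 mJ; apply/mapP; exists `|m|%N; first by rewrite mem_index_iota.
by rewrite -[m]opprK abszN gez0_abs // oppr_ge0.
Qed.

Lemma levels_bounds m : m \in levels -> - J%:Z <= m /\ m <= 0.
Proof. by case/mapP => j; rewrite mem_index_iota => /andP[_ jJ] ->; lia. Qed.

Lemma active_levels z i m : active z i m -> m \in levels.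
Proof. by case/and3P => m0 mS _; apply: mem_levels => //; exact: S_lt_J mS. Qed.

(* Two active pairs of the same colour would put [z] in two disjoint levels. *)
Lemma card_active z :
  (#|[pred p : 'I_J * 'I_k | active z p.2 (- (p.1 : nat)%:Z)]| <= d.+1)%N.
Proof.
rewrite -(card_in_imset (f := fun p : 'I_J * 'I_k => c p.2 p.1)).
  by apply: leq_trans (max_card _) _; rewrite card_ord.
move=> [j1 i1] [j2 i2]; rewrite !inE /= /active !abszN !absz_nat.
move=> /and3P[_ s1 /g_supp v1] /and3P[_ s2 /g_supp v2] ceq.
case: (eqVneq (i1, (j1 : nat)) (i2, (j2 : nat))) => [[-> /val_inj ->] //|ne].
by have /seteqP[/(_ z) + _] := colouring s1 s2 ne ceq; move=> /(_ (conj v1 v2)).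
Qed.

Lemma sum_active_le z s : uniq s ->
  \sum_(m <- s) \sum_(i < k) ((active z i m)%:R : R) <= d.+1%:R.
Proof.
move=> us; apply: le_trans (big_uniq_supp_le us levels_uniq _ _) _.
- by move=> m; apply: sumr_ge0 => i _; rewrite ler0n.
- move=> m mL; apply: big1 => i _; case A: (active z i m) => //.
  by rewrite (active_levels A) in mL.
rewrite big_map big_mkord pair_big /= -natr_sum ler_nat.
apply: leq_trans (card_active z).
rewrite (eq_bigr (fun p : 'I_J * 'I_k => if active z p.2 (- (p.1 : nat)%:Z) then 1%N else 0%N)).
  by rewrite -big_mkcond sum1_card.
by move=> p _; case: (active _ _ _).
Qed.

Lemma level_bump_le_active z i m : level_bump i m z <= (active z i m)%:R.
Proof.
rewrite /level_bump /active; case: ifP => [/andP[-> ->] /=|_]; last first.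
  by rewrite ler0n.
have := g_ge0 i (iter `|m| T z); rewrite le_eqVlt => /orP[/eqP <-|->].
  by rewrite ler0n.
exact: g_le1.
Qed.

Lemma sum_level_bump_le z s : uniq s ->
  \sum_(m <- s) \sum_(i < k) level_bump i m z <= d.+1%:R.
Proof.
move=> us; apply: le_trans (sum_active_le z us).
by apply: ler_sum => m _; apply: ler_sum => i _; exact: level_bump_le_active.
Qed.

Lemma level_massN i (j : nat) z :
  level_mass i (- j%:Z) z = (a i j)%:R * g i (iter j T z).
Proof. by rewrite /level_mass oppr_le0 abszN absz_nat. Qed.

Lemma level_mass_pos i (n : nat) z : level_mass i n.+1%:Z z = 0.
Proof. by rewrite /level_mass lez0_nat. Qed.

Lemma level_bumpN i (j : nat) z :
  level_bump i (- j%:Z) z = if j \in S i then g i (iter j T z) else 0.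
Proof. by rewrite /level_bump oppr_le0 abszN absz_nat. Qed.

Lemma level_bump_pos i (n : nat) z : level_bump i n.+1%:Z z = 0.
Proof. by rewrite /level_bump lez0_nat. Qed.

Lemma level_mass_shiftN i (j k0 : nat) x :
  `|level_mass i (- j%:Z) (iter k0 T x) - level_mass i (- (j + k0)%N%:Z) x| <=
    k0%:R * (level_bump i (- j%:Z) (iter k0 T x) + level_bump i (- (j + k0)%N%:Z) x).
Proof.
rewrite !level_massN !level_bumpN iterD -mulrBl.
set gz := g i _; have gz0 : 0 <= gz := g_ge0 _ _.
rewrite normrM (ger0_norm gz0).
have [l1 l2] := plateau_lipschitz (S i) L j k0.
have h1 : (a i j)%:R <= (a i (j + k0))%:R + k0%:R :> R by rewrite -natrD ler_nat.
have h2 : (a i (j + k0))%:R <= (a i j)%:R + k0%:R :> R by rewrite -natrD ler_nat.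
have hD : `|(a i j)%:R - (a i (j + k0))%:R| <= k0%:R :> R.
  by rewrite ler_norml; apply/andP; split; lra.
have k0_ge0 : 0 <= k0%:R :> R by [].
set D := `|_ - _| in hD *.
case: (boolP (j \in S i)) => jS; case: (boolP (j + k0 \in S i)) => jkS; try nra.
by rewrite /D /a !plateau_notin // subrr normr0 mul0r addr0 mulr0.
Qed.

(* Levels pushed past [0] by the shift carry little mass: [a i j <= j + 1]. *)
Lemma level_mass_shift_pos i (n k0 : nat) x :
  `|level_mass i n.+1%:Z (iter k0 T x) - level_mass i (n.+1%:Z - k0%:Z) x| <=
    k0%:R * (level_bump i n.+1%:Z (iter k0 T x) + level_bump i (n.+1%:Z - k0%:Z) x).
Proof.
rewrite level_mass_pos level_bump_pos sub0r normrN add0r.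
have [kn|nk] := leqP k0 n.
  have -> : n.+1%:Z - k0%:Z = (n - k0).+1%:Z by lia.
  by rewrite level_mass_pos level_bump_pos normr0 mulr0.
have -> : n.+1%:Z - k0%:Z = - (k0 - n.+1)%N%:Z by lia.
rewrite level_massN level_bumpN.
set gz := g i _; have gz0 : 0 <= gz := g_ge0 _ _.
rewrite normrM (ger0_norm gz0) ger0_norm //.
case: (boolP ((k0 - n.+1)%N \in S i)) => jS; last by rewrite /a plateau_notin // mul0r mulr0.
apply: ler_wpM2r => //; rewrite ler_nat.
by apply: leq_trans (plateau_le_succ _ _ _) _; lia.
Qed.

Lemma level_mass_shift i m k0 x :
  `|level_mass i m (iter k0 T x) - level_mass i (m - k0%:Z) x| <=
    k0%:R * (level_bump i m (iter k0 T x) + level_bump i (m - k0%:Z) x).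
Proof.
have [[j ->]|[n ->]] := intN_or_pos m; last exact: level_mass_shift_pos.
have -> : - j%:Z - k0%:Z = - (j + k0)%N%:Z by lia.
exact: level_mass_shiftN.
Qed.

Lemma mass_shift_le x k0 s : uniq s ->
  \sum_(m <- s) `|mass (iter k0 T x) m - mass x (m - k0%:Z)| <= (2 * k0 * d.+1)%:R.
Proof.
move=> us.
apply: le_trans (_ : \sum_(m <- s) \sum_(i < k)
  (k0%:R * (level_bump i m (iter k0 T x) + level_bump i (m - k0%:Z) x)) <= _).
  apply: ler_sum => m _; rewrite /mass -sumrB; apply: le_trans (ler_norm_sum _ _ _) _.
  by apply: ler_sum => i _; exact: level_mass_shift.
under eq_bigr do rewrite -mulr_sumr big_split /=.
rewrite -mulr_sumr big_split /=.
have us' : uniq [seq m - k0%:Z | m <- s] by rewrite map_inj_uniq // => p q /addIr.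
have := sum_level_bump_le (iter k0 T x) us.
have := sum_level_bump_le x us'; rewrite big_map => h1 h2.
rewrite -mulnA !natrM.
have k0_ge0 : 0 <= k0%:R :> R by [].
set A := \sum_(_ <- s) _ in h2 *; set B := \sum_(_ <- s) _ in h1 *.
nra.
Qed.

Hypothesis L_gt0 : (0 < L)%N.
Hypothesis thick_level : forall z, exists i n, a i n = L /\ g i (iter n T z) = 1.

Lemma level_mass_ge0 i m z : 0 <= level_mass i m z.
Proof. by rewrite /level_mass; case: ifP => // _; rewrite mulr_ge0 ?ler0n. Qed.

Lemma mass_ge0 z m : 0 <= mass z m.
Proof. by apply: sumr_ge0 => i _; exact: level_mass_ge0. Qed.

Lemma level_mass_active i m z : level_mass i m z != 0 -> active z i m.
Proof.
rewrite /level_mass /active; case: ifP => m0; last by rewrite eqxx.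
rewrite mulf_eq0 negb_or => /andP[an gn] /=; apply/andP; split.
  by apply: contraNT an; rewrite /a => /plateau_notin ->.
by rewrite lt_neqAle eq_sym gn g_ge0.
Qed.

Lemma mass_supp z m : m \notin levels -> mass z m = 0.
Proof.
move=> mL; apply: big1 => i _; apply/eqP; apply: contraNT mL.
by move=> /level_mass_active; exact: active_levels.
Qed.

Lemma total_mass_ge z : L%:R <= total_mass z.
Proof.
have [i [n [an gn]]] := thick_level z.
have nS : n \in S i.
  by apply: contraLR L_gt0 => /plateau_notin; rewrite -an /a => ->.
have nL : - n%:Z \in levels.
  by apply: mem_levels; [rewrite oppr_le0 | rewrite abszN absz_nat; exact: S_lt_J nS].
rewrite /total_mass (bigD1_seq _ nL levels_uniq) /=.
apply: (@le_trans _ _ (mass z (- n%:Z))); last first.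
  by rewrite lerDl; apply: sumr_ge0 => m _; exact: mass_ge0.
rewrite /mass (bigD1 i) //= level_massN an gn mulr1.
by rewrite lerDl; apply: sumr_ge0 => j _; exact: level_mass_ge0.
Qed.

Lemma total_mass_gt0 z : 0 < total_mass z.
Proof. by apply: lt_le_trans (total_mass_ge z); rewrite ltr0n. Qed.

Lemma tower_measure_supp z m : m \notin levels -> tower_measure z m = 0.
Proof. by move=> /(mass_supp z) h; rewrite /tower_measure h mul0r. Qed.

Lemma in_Pd_tower_measure z : in_Pd d (tower_measure z).
Proof.
have W_neq0 := gt_eqF (total_mass_gt0 z).
exists [seq m <- levels | mass z m != 0]; split.
- exact/filter_uniq/levels_uniq.
- rewrite -(ler_nat R) -sum1_size natr_sum.
  apply: le_trans (sum_active_le z (filter_uniq _ levels_uniq)).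
  rewrite big_seq [X in _ <= X]big_seq; apply: ler_sum => m.
  rewrite mem_filter => /andP[um _].
  have [i _ /level_mass_active act_i] : exists2 i, true & level_mass i m z != 0.
    apply/exists_inP; apply: contraNT um; rewrite negb_exists_in => /forall_inP H.
    by apply/eqP; apply: big1 => i _; apply/eqP; move/negbTE: (H i isT) => /negbFE.
  rewrite (bigD1 i) //= act_i -[X in X <= _]addr0 lerD //.
  by apply: sumr_ge0 => j _; rewrite ler0n.
- move=> m; rewrite mem_filter negb_and negbK => /orP[/eqP m0|/tower_measure_supp //].
  by rewrite /tower_measure m0 mul0r.
- by move=> m; rewrite divr_ge0 ?mass_ge0 // ltW // total_mass_gt0.
rewrite big_filter big_mkcond /=.
rewrite (eq_bigr (tower_measure z)); last first.
  by move=> m _; case: ifP => // /negbFE/eqP m0; rewrite /tower_measure m0 mul0r.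
by rewrite /tower_measure -mulr_suml -/(total_mass z) divff // W_neq0.
Qed.

Definition shift_window k0 : seq int :=
  [seq j%:Z - J%:Z | j <- index_iota 0 (J + k0).+1].

Lemma shift_window_uniq k0 : uniq (shift_window k0).
Proof. by rewrite map_inj_uniq ?iota_uniq // => p q /addIr []. Qed.

Lemma mem_shift_window k0 m : - J%:Z <= m -> m <= k0%:Z -> m \in shift_window k0.
Proof.
move=> h1 h2; apply/mapP; exists (absz (m + J%:Z)).
  rewrite mem_index_iota /=.
  have ht : (absz (m + J%:Z))%:Z = m + J%:Z by rewrite gez0_abs //; lia.
  lia.
by rewrite gez0_abs; lia.
Qed.

(* Both the normalisation and the masses move by [2 k0 (d + 1)], and the
   normalisation is at least [L]. *)
Lemma tower_measure_shift_le z k0 : exists s, [/\ uniq s,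
  (forall m, m \notin s ->
     tower_measure (iter k0 T z) m = 0 /\ tower_measure z (m - k0%:Z) = 0) &
  \sum_(m <- s) `|tower_measure (iter k0 T z) m - tower_measure z (m - k0%:Z)|
     <= (4 * k0 * d.+1)%:R / L%:R].
Proof.
have sub1 : {subset levels <= shift_window k0}.
  by move=> m /levels_bounds [h1 h2]; apply: mem_shift_window => //; lia.
have sub2 m : m - k0%:Z \in levels -> m \in shift_window k0.
  by move=> /levels_bounds [h1 h2]; apply: mem_shift_window; lia.
exists (shift_window k0); split; first exact: shift_window_uniq.
  move=> m ms; split; apply: tower_measure_supp; apply: contra ms; first exact: sub1.
  exact: sub2.
set z1 := iter k0 T z; set W1 := total_mass z1; set W := total_mass z.
have us := shift_window_uniq k0.
have us' : uniq [seq m - k0%:Z | m <- shift_window k0].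
  by rewrite map_inj_uniq // => p q /addIr.
have hW1 : \sum_(m <- shift_window k0) mass z1 m = W1.
  by rewrite (big_uniq_supp us levels_uniq (mass_supp z1) sub1).
have hW : \sum_(m <- shift_window k0) mass z (m - k0%:Z) = W.
  rewrite -(big_map (fun m => m - k0%:Z) xpredT (mass z)).
  rewrite (big_uniq_supp us' levels_uniq (mass_supp z)) // => m mL.
  by apply/mapP; exists (m + k0%:Z); rewrite ?addrK //; apply: sub2; rewrite addrK.
have hD := mass_shift_le z k0 us; rewrite -/z1 in hD.
set D := \sum_(_ <- _) _ in hD.
have hWD : `|W1 - W| <= D by rewrite -hW1 -hW -sumrB; exact: ler_norm_sum.
have W1_gt0 : 0 < W1 := total_mass_gt0 z1; have W_gt0 : 0 < W := total_mass_gt0 z.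
apply: le_trans (ler_sum _ (fun m _ => dist_ratio_le (mass z1 m) (mass_ge0 _ _) W1_gt0 W_gt0)) _.
rewrite big_split /= -!mulr_suml hW -/D.
have -> : W * (`|W1 - W| / (W1 * W)) = `|W1 - W| / W1.
  by field; rewrite !gt_eqF.
apply: (@le_trans _ _ ((2 * (2 * k0 * d.+1)%:R) / W1)).
  rewrite -mulrDl ler_wpM2r ?invr_ge0 ?(ltW W1_gt0) // mulr_natl mulr2n.
  exact: lerD hD (le_trans hWD hD).
have -> : (4 * k0 * d.+1)%:R = 2 * (2 * k0 * d.+1)%:R :> R.
  by rewrite -natrM; congr (_%:R); lia.
rewrite ler_wpM2l ?mulr_ge0 ?ler0n // lef_pV2 ?posrE ?ltr0n //.
exact: total_mass_ge.
Qed.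

Lemma equivariant_tower_measure (E : seq int) (K : nat) (eps : R) :
  (forall e, e \in E -> (`|e| <= K)%N) -> (4 * K * d.+1)%:R / L%:R < eps ->
  equivariant T E eps tower_measure.
Proof.
move=> EK Keps n nE x y.
have bound k0 : (k0 <= K)%N -> (4 * k0 * d.+1)%:R / L%:R < eps.
  move=> k0K; apply: le_lt_trans Keps; rewrite ler_wpM2r ?invr_ge0 ?ler0n //.
  by rewrite ler_nat leq_mul2r leq_mul2l k0K orbT.
case: n nE => k0 nE /= => [->|yx].
  have [s [us supp le]] := tower_measure_shift_le x k0.
  by exists s; split => //; apply: le_lt_trans le (bound _ (EK _ nE)).
have [s [us supp le]] := tower_measure_shift_le y k0.+1; subst x.
exists [seq m - k0.+1%:Z | m <- s]; split.
- by rewrite map_inj_uniq // => p q /addIr.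
- move=> m ms; rewrite /alpha NegzE opprK.
  have [//|h1 h2] := supp (m + k0.+1%:Z).
    by apply: contra ms => h; apply/mapP; exists (m + k0.+1%:Z); rewrite ?addrK.
  by rewrite addrK in h2.
have k0K : (k0.+1 <= K)%N by have := EK _ nE; rewrite NegzE abszN.
rewrite big_map; apply: le_lt_trans (bound _ k0K).
apply: le_trans le; rewrite le_eqVlt; apply/orP; left; apply/eqP.
by apply: eq_bigr => m _; rewrite distrC /alpha NegzE opprK subrK.
Qed.

Hypothesis g_continuous : forall i, continuous (g i).
Hypothesis T_continuous : continuous T.

Lemma mass_continuous m : continuous (mass ^~ m).
Proof.
apply: continuous_big; first exact: add_continuous.
move=> i _ x; rewrite /level_mass; case: (m <= 0); last exact: cvg_cst.
apply: cvgM; first exact: cvg_cst.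
apply: (continuous_comp (f := iter (absz m) T) (g := g i)).
  exact: continuous_iter.
exact: g_continuous.
Qed.

Lemma tower_measure_continuous m : continuous (tower_measure ^~ m).
Proof.
move=> x; apply: cvgM; first exact: mass_continuous.
apply: cvgV; first by rewrite gt_eqF // total_mass_gt0.
apply: continuous_big; first exact: add_continuous.
by move=> n _; exact: mass_continuous.
Qed.

Lemma rho_continuous_tower_measure : rho_continuous tower_measure.
Proof.
move=> x eps eps0.
pose f y := \sum_(m <- levels) `|tower_measure y m - tower_measure x m|.
have f_cvg : f y @[y --> x] --> f x.
  apply: cvg_big; first exact: add_continuous.
  move=> m _; apply: cvg_norm; apply: cvgB; first exact: tower_measure_continuous.
  exact: cvg_cst.
have fx0 : f x = 0 by rewrite /f big1 // => m _; rewrite subrr normr0.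
rewrite fx0 in f_cvg.
near=> y; exists levels; split; first exact: levels_uniq.
  by move=> m /[dup] /(tower_measure_supp y) -> /(tower_measure_supp x) ->.
by near: y; exact: cvgr_lt 0 f_cvg eps eps0.
Unshelve. all: by end_near.
Qed.
End TowerMeasure.

Lemma exists_nat_ratio_lt (R : realType) (C : nat) (eps : R) :
  0 < eps -> exists2 L : nat, (0 < L)%N & C%:R / L%:R < eps.
Proof.
move=> eps0; exists (Num.truncn (C%:R / eps)).+1 => //.
rewrite ltr_pdivrMr ?ltr0n // mulrC -ltr_pdivrMr //.
exact: truncnS_gt.
Qed.

Lemma exists_pos_continuous_on_open (R : realType) (X : metricType R) (U : set X) :
  open U -> exists h : X -> R,
  [/\ continuous h, forall y, 0 <= h y, forall y, ~ U y -> h y = 0 &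
      forall y, U y -> 0 < h y].
Proof.
move=> Uo.
case: (pselect (exists c, ~ U c)) => [[c0 nc0]|allU]; last first.
  exists (fun=> 1); split => // [y|y nUy]; first exact: cvg_cst.
  by exfalso; apply: allU; exists y.
pose e y := edist_inf (~` U) y.
have e_fin y : e y \is a fin_num.
  rewrite ge0_fin_numE ?edist_inf_ge0 //.
  apply: (@le_lt_trans _ _ (edist (y, c0))); first by apply: ereal_inf_lbound; exists c0.
  apply: (@le_lt_trans _ _ (mdist y c0 + 1)%:E); last exact: ltry.
  apply: edist_fin; first by rewrite ltr_wpDl ?mdist_ge0.
  by rewrite /= ballEmdist /= ltrDl.
exists (fine \o e); split.
- move=> y; have := @edist_inf_continuous R X (~` U) y.
  by rewrite /continuous_at -[edist_inf _ y]fineK ?e_fin // => /fine_cvgP [_].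
- by move=> y; apply: fine_ge0; exact: edist_inf_ge0.
- by move=> y nUy; rewrite /= /e edist_inf0.
move=> y Uy; have /nbhs_ballP [r r0 sub] : nbhs y U by move: Uo; rewrite openE; exact.
have : (r%:E <= e y)%E.
  apply: le_ereal_inf_tmp => _ [z nUz <-].
  by rewrite leNgt; apply/negP => /edist_lt_ball /= yz; apply: nUz; exact: sub.
by rewrite -[e y]fineK ?e_fin // lee_fin => /(lt_le_trans r0).
Qed.

Lemma compact_pos_lbound (R : realType) (X : topologicalType) (f : X -> R) :
  compact [set: X] -> continuous f -> (forall x, 0 < f x) ->
  exists2 del, 0 < del & forall x, del <= f x.
Proof.
move=> Xc fc fpos.
case: (pselect (exists x0 : X, True)) => [[x0 _]|noX]; last first.
  by exists 1 => // x; exfalso; apply: noX; exists x.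
have [xmin _ xminP] := compact_EVT_min (ex_intro _ x0 I) Xc (continuous_subspaceT fc).
by exists (f xmin) => // x; apply: xminP; rewrite inE.
Qed.

(* The maximum over the admissible levels of the [h i] stays above some
   [del > 0] by compactness, so rescaling by [del] and truncating at [1]
   makes one admissible level equal to [1] at every point. *)
Lemma exists_tower_bumps (R : realType) (X : metricType R) (T : X -> X)
  (k N : nat) (V : 'I_k -> set X) (admissible : 'I_k -> 'I_N -> bool) :
  continuous T -> compact [set: X] -> (forall i, open (V i)) ->
  (forall z, exists i n, admissible i n /\ V i (iter n T z)) ->
  exists g : 'I_k -> X -> R, [/\ forall i, continuous (g i),
    forall i y, 0 <= g i y, forall i y, g i y <= 1,
    forall i y, 0 < g i y -> V i y &
    forall z, exists i (n : 'I_N), admissible i n /\ g i (iter n T z) = 1].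
Proof.
move=> Tc Xc Vo cover.
have [h hP] := choice (fun i => exists_pos_continuous_on_open (Vo i)).
pose hmax z := \big[Num.max/0]_(p : 'I_k * 'I_N | admissible p.1 p.2)
  h p.1 (iter p.2 T z).
have hmax_cont : continuous hmax.
  apply: continuous_big; first exact: max_continuous.
  move=> p _ x; have [hc _ _ _] := hP p.1.
  apply: (continuous_comp (f := iter p.2 T) (g := h p.1)); last exact: hc.
  exact: continuous_iter.
have hmax_pos z : 0 < hmax z.
  have [i [n [adm Vn]]] := cover z; have [_ _ _ hpos] := hP i.
  apply: lt_le_trans (hpos _ Vn) _.
  exact: (le_bigmax_cond _ (j := (i, n)) (fun p : 'I_k * 'I_N => h p.1 (iter p.2 T z))).
have [del del0 delP] := compact_pos_lbound Xc hmax_cont hmax_pos.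
exists (fun i y => Num.min 1 (h i y / del)); split.
- move=> i; have [hc _ _ _] := hP i.
  apply: min_fun_continuous => x; first exact: cvg_cst.
  by apply: cvgM; [exact: hc | exact: cvg_cst].
- by move=> i y; have [_ h0 _ _] := hP i; rewrite le_min ler01 divr_ge0 // ltW.
- by move=> i y; rewrite ge_min lexx.
- move=> i y; have [_ _ h0 _] := hP i; rewrite lt_min => /andP[_ hd].
  by case: (pselect (V i y)) => // nV; rewrite h0 // mul0r ltxx in hd.
move=> z.
have : ~ (forall p : 'I_k * 'I_N, admissible p.1 p.2 -> h p.1 (iter p.2 T z) < del).
  by move=> H; have := delP z; rewrite leNgt => /negP; apply; exact: bigmax_lt.
move=> /existsNP [[i n]] /= /not_implyP [adm ndel]; exists i, n; split => //.
by apply/min_l; rewrite ler_pdivlMr // mul1r leNgt; apply/negP.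
Qed.

Lemma am_prop_of_tow_prop (R : realType) (X : metricType R) (T : X -> X) (d : nat) :
  continuous T -> compact [set: X] -> tow_prop T d -> am_prop R T d.
Proof.
move=> Tc Xc tow E eps eps0.
pose K := (\max_(e <- E) `|e|)%N.
have EK e : e \in E -> (`|e| <= K)%N by move=> eE; exact: leq_bigmax_seq.
have [L L_gt0 Leps] := exists_nat_ratio_lt (4 * K * d.+1) eps0.
have [k [V [S [Vo _ [c colouring] _ thick]]]] :=
  tow [seq l%:Z - L%:Z | l <- iota 0 (2 * L).+1].
pose J := (\max_(i < k) \max_(m <- S i) m)%N.+1.
have S_lt_J i m : m \in S i -> (m < J)%N.
  by move=> mS; rewrite ltnS; apply: leq_trans (leq_bigmax i); exact: leq_bigmax_seq.
have cover z : exists i (n : 'I_J), (plateau (S i) L n == L) /\ V i (iter n T z).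
  have [i [n [nS Vn shifts]]] := thick z.
  exists i, (Ordinal (S_lt_J _ _ nS)); split => //=.
  by apply/eqP; apply: plateau_full_of_shifts.
have [g [g_cont g_ge0 g_le1 g_supp g_thick]] := exists_tower_bumps Tc Xc Vo cover.
have thick_level z : exists i n, plateau (S i) L n = L /\ g i (iter n T z) = 1.
  by have [i [n [/eqP h1 h2]]] := g_thick z; exists i, n.
exists (tower_measure T S L J g); split.
- exact: (in_Pd_tower_measure colouring S_lt_J g_ge0 g_supp L_gt0 thick_level).
- exact: (rho_continuous_tower_measure S_lt_J g_ge0 L_gt0 thick_level g_cont Tc).
exact: (equivariant_tower_measure colouring S_lt_J g_ge0 g_le1 g_supp L_gt0 thick_level EK).
Qed.

Theorem lemma5p7 (R : realType) (X : metricType R) (T : X -> X) :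
  compact [set: X] ->
  (forall y : X, exists x : X, T x = y) ->
  local_homeo T ->
  finite_set (Sp_l T) ->
  (forall x, Sp_l T x -> open [set x]) ->
  (dim_am R T <= dim_tow R T)%E.
Proof.
move=> Xc _ [Tc _] _ _.
apply: ereal_inf_le_tmp => _ [d tow_d <-]; exists d => //.
exact: am_prop_of_tow_prop.
Qed.
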